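(* For every $n\ge1$, $$\mathrm{vol}\,C(\mathbb{A}_n)=\sum_{i=1}^{n}\binom{n-1}{i-1}\binom{n+1}{i}=\binom{2n}{n}.$$
   Context: Let $\Phi^+=\{e_i+e_{i+1}+\dots+e_j: 1\le i\le j\le n\}\subset\mathbb{Z}^n$ and $C(\mathbb{A}_n)=\mathrm{conv}(\Phi^+\cup(-\Phi^+))\subset\mathbb{R}^n$, the convex hull of all roots of the root system $\mathbb{A}_n$ written in the basis of simple roots. The integral volume $\mathrm{vol}$ on $\mathbb{R}^n$ is $n!$ times Lebesgue measure. *)

From Stdlib Require Import Reals ZArith ClassicalEpsilon.
Open Scope R_scope.

(* Points of R^n are functions nat -> R; only coordinates 0..n-1 matter. *)

Fixpoint fsum (n : nat) (f : nat -> R) : R :=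
  match n with O => 0 | S m => fsum m f + f m end.

(* k-th coordinate of the positive root e_i + e_{i+1} + ... + e_j (0-indexed) *)
Definition rootc (i j k : nat) : R :=
  if (Nat.leb i k && Nat.leb k j)%bool then 1 else 0.

(* x in C(A_n) = conv(Phi+ U -Phi+): x is a convex combination of the roots
   +-(e_i+...+e_j), 0 <= i <= j < n, with weights w i j (for +) and v i j (for -). *)
Definition in_CA (n : nat) (x : nat -> R) : Prop :=
  exists w v : nat -> nat -> R,
    (forall i j, 0 <= w i j /\ 0 <= v i j) /\
    fsum n (fun i => fsum n (fun j =>
       if Nat.leb i j then w i j + v i j else 0)) = 1 /\
    forall k, (k < n)%nat ->
      x k = fsum n (fun i => fsum n (fun j =>
               if Nat.leb i j then (w i j - v i j) * rootc i j k else 0)).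

Definition in_cube (n k : nat) (a : nat -> Z) (x : nat -> R) : Prop :=
  forall m, (m < n)%nat ->
    IZR (a m) / INR k <= x m <= (IZR (a m) + 1) / INR k.

Definition ind (P : Prop) : R :=
  if excluded_middle_informative P then 1 else 0.

(* Sum of F a over all integer vectors a with a m in [-L, L) for m < d
   (coordinates >= d set to 0). *)
Fixpoint gsum (d L : nat) (F : (nat -> Z) -> R) : R :=
  match d with
  | O => F (fun _ => 0%Z)
  | S d' => fsum (2 * L) (fun t =>
       gsum d' L (fun a => F (fun m => if Nat.eqb m d'
                                         then (Z.of_nat t - Z.of_nat L)%Z
                                         else a m)))
  end.

(* Inner / outer Jordan approximations of P inside the box [-R,R]^n
   by the grid of cubes of side 1/k. *)
Definition inner_approx (n : nat) (P : (nat -> R) -> Prop) (Rb k : nat) : R :=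
  (/ INR k) ^ n * gsum n (Rb * k) (fun a => ind (forall x, in_cube n k a x -> P x)).

Definition outer_approx (n : nat) (P : (nat -> R) -> Prop) (Rb k : nat) : R :=
  (/ INR k) ^ n * gsum n (Rb * k) (fun a => ind (exists x, in_cube n k a x /\ P x)).

(* P (a bounded subset of R^n) is Jordan measurable with Jordan content
   (= Lebesgue measure) c. *)
Definition jordan_content (n : nat) (P : (nat -> R) -> Prop) (c : R) : Prop :=
  exists Rb : nat,
    (forall x, P x -> forall m, (m < n)%nat -> - INR Rb <= x m <= INR Rb) /\
    Un_cv (fun k => inner_approx n P Rb (S k)) c /\
    Un_cv (fun k => outer_approx n P Rb (S k)) c.

(* In simple-root coordinates, x lies in C(A_n) iff the path 0, x_0, ..., x_(n-1), 0 has
   l1-length [pathlen n x 0] at most 2: this length is a norm equal to 2 on every root, and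
   conversely the ascents and the descents of the path, each of total size half its length,
   pair up into a convex combination of roots.  So the number of grid cubes of side 1/K inside
   (resp. meeting) C(A_n) lies between the numbers of integer points of path length at most
   2(K - n) and 2K (resp. 2K and 2(K + n)).  Fixing the last coordinate gives a recursion in
   the dimension for the number of integer points [a] with [pathlen d a s <= s + 2 e]; the
   polynomial sum_k C(d + k, k) C(s + d, d - k) C(e, k) satisfies it, as both sides obey the
   same finite-difference recurrence in [(s, e)].  For [s = 0] its leading coefficient in [e]
   is C(2n, n) / n!, and Vandermonde's convolution turns this into the stated binomial sum. *)

From Pilot Require Import Defs.
From Stdlib Require Import Reals ZArith ClassicalEpsilon Lra Lia.
Open Scope R_scope.

Lemma fsum_S n f : fsum (S n) f = fsum n f + f n.
Proof. reflexivity. Qed.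

Lemma fsum_ext n f g : (forall i, (i < n)%nat -> f i = g i) -> fsum n f = fsum n g.
Proof.
  induction n as [|n IH]; intros Hfg; simpl; [reflexivity|].
  rewrite IH, Hfg; auto with arith.
Qed.

Lemma fsum_le n f g : (forall i, (i < n)%nat -> f i <= g i) -> fsum n f <= fsum n g.
Proof.
  induction n as [|n IH]; intros Hfg; simpl; [lra|].
  apply Rplus_le_compat; auto with arith.
Qed.

Lemma fsum_eq0 n f : (forall i, (i < n)%nat -> f i = 0) -> fsum n f = 0.
Proof.
  induction n as [|n IH]; intros Hf; simpl; [reflexivity|].
  rewrite IH, Hf; auto with arith; ring.
Qed.

Lemma fsum_nonneg n f : (forall i, (i < n)%nat -> 0 <= f i) -> 0 <= fsum n f.
Proof. intros Hf. rewrite <- (fsum_eq0 n (fun _ => 0)) by auto. now apply fsum_le. Qed.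

Lemma fsum_add n f g : fsum n (fun i => f i + g i) = fsum n f + fsum n g.
Proof. induction n; simpl; [ring | rewrite IHn; ring]. Qed.

Lemma fsum_sub n f g : fsum n (fun i => f i - g i) = fsum n f - fsum n g.
Proof. induction n; simpl; [ring | rewrite IHn; ring]. Qed.

Lemma fsum_mull n c f : fsum n (fun i => c * f i) = c * fsum n f.
Proof. induction n; simpl; [ring | rewrite IHn; ring]. Qed.

Lemma fsum_mulr n c f : fsum n (fun i => f i * c) = fsum n f * c.
Proof. induction n; simpl; [ring | rewrite IHn; ring]. Qed.

Lemma fsum_Sl n f : fsum (S n) f = f O + fsum n (fun i => f (S i)).
Proof. induction n; simpl in *; [ring | rewrite IHn; ring]. Qed.

Lemma fsum_split a b f : fsum (a + b) f = fsum a f + fsum b (fun i => f (a + i)%nat).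
Proof.
  induction b as [|b IH]; simpl; [rewrite Nat.add_0_r; ring|].
  rewrite Nat.add_succ_r; simpl; rewrite IH; ring.
Qed.

Lemma fsum_split_at a n f :
  (a <= n)%nat -> fsum n f = fsum a f + fsum (n - a) (fun i => f (a + i)%nat).
Proof. intros Ha. rewrite <- fsum_split. f_equal. lia. Qed.

Lemma fsum_rev n f : fsum n f = fsum n (fun i => f (n - 1 - i)%nat).
Proof.
  induction n as [|n IH]; [reflexivity|].
  rewrite (fsum_Sl n (fun i => f (S n - 1 - i)%nat)), fsum_S, IH, Rplus_comm.
  f_equal; [f_equal; lia|]. apply fsum_ext. intros i Hi. f_equal. lia.
Qed.

Lemma fsum_trunc n m f :
  (m <= n)%nat -> (forall i, (m <= i < n)%nat -> f i = 0) -> fsum n f = fsum m f.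
Proof.
  intros Hmn Hf. rewrite (fsum_split_at m n) by exact Hmn.
  rewrite (fsum_eq0 (n - m)); [ring|]. intros i Hi. apply Hf. lia.
Qed.

Lemma fsum_le_len m k f :
  (m <= k)%nat -> (forall i, (i < k)%nat -> 0 <= f i) -> fsum m f <= fsum k f.
Proof.
  intros Hmk Hf. rewrite (fsum_split_at m k) by exact Hmk.
  assert (0 <= fsum (k - m) (fun i => f (m + i)%nat)) by (apply fsum_nonneg; intros; apply Hf; lia).
  lra.
Qed.

Lemma fsum_swap n m f :
  fsum n (fun i => fsum m (fun j => f i j)) = fsum m (fun j => fsum n (fun i => f i j)).
Proof.
  induction n as [|n IH]; simpl; [symmetry; now apply fsum_eq0|].
  now rewrite IH, <- fsum_add.
Qed.

Lemma fsum_prod n m f g : fsum n (fun i => fsum m (fun j => f i * g j)) = fsum n f * fsum m g.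
Proof. rewrite <- fsum_mulr. apply fsum_ext. intros. apply fsum_mull. Qed.

Lemma fsum_const n c : fsum n (fun _ => c) = INR n * c.
Proof. induction n as [|n IH]; simpl fsum; [simpl; ring | rewrite IH, S_INR; ring]. Qed.

Lemma fsum_shift_index N f g :
  f O = 0 -> g N = 0 -> (forall k, (k < N)%nat -> f (S k) = g k) ->
  fsum (S N) f = fsum (S N) g.
Proof.
  intros Hf0 HgN Hfg. rewrite fsum_Sl, fsum_S, Hf0, HgN.
  rewrite (fsum_ext N _ g) by exact Hfg. ring.
Qed.

Lemma fsum_upper_triangle (h : nat -> nat -> R) n :
  fsum (S n) (fun a => fsum (S n) (fun b => if Nat.ltb a b then h a b else 0)) =
  fsum n (fun i => fsum n (fun j => if Nat.leb i j then h i (S j) else 0)).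
Proof.
  rewrite fsum_S, (fsum_eq0 (S n) (fun b => if Nat.ltb n b then h n b else 0)), Rplus_0_r.
  2:{ intros i Hi. destruct (Nat.ltb_spec n i); [lia|reflexivity]. }
  apply fsum_ext. intros i _. rewrite fsum_Sl.
  destruct (Nat.ltb_spec i 0); [lia|]. rewrite Rplus_0_l.
  apply fsum_ext. intros j _.
  destruct (Nat.ltb_spec i (S j)), (Nat.leb_spec i j); lia || reflexivity.
Qed.

Lemma fsum_prefix n k f :
  (k < n)%nat -> fsum n (fun i => if Nat.leb i k then f i else 0) = fsum (S k) f.
Proof.
  intros Hk. rewrite (fsum_split_at (S k) n), (fsum_eq0 (n - S k)) by
    (lia || (intros i _; destruct (Nat.leb_spec (S k + i) k); lia || reflexivity)).
  rewrite Rplus_0_r. apply fsum_ext. intros i Hi. destruct (Nat.leb_spec i k); lia || reflexivity.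
Qed.

Lemma fsum_suffix n k f : (k < n)%nat ->
  fsum n (fun j => if Nat.leb k j then f (S j) else 0) = fsum (S n) f - fsum (S k) f.
Proof.
  intros Hk. rewrite (fsum_split_at k n), (fsum_split_at (S k) (S n)), (fsum_eq0 k) by
    (lia || (intros i Hi; destruct (Nat.leb_spec k i); lia || reflexivity)).
  replace (S n - S k)%nat with (n - k)%nat by lia.
  rewrite (fsum_ext (n - k) _ (fun i => f (S k + i)%nat)); [ring|].
  intros i _. destruct (Nat.leb_spec k (k + i)); [reflexivity | lia].
Qed.

Fixpoint bin (n k : nat) : nat :=
  match n, k with
  | _, O => 1%nat
  | O, S _ => 0%nat
  | S n', S k' => (bin n' k' + bin n' k)%nat
  end.

Lemma bin_0 n : bin n 0 = 1%nat.
Proof. now destruct n. Qed.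

Lemma bin_small n k : (n < k)%nat -> bin n k = 0%nat.
Proof.
  revert k; induction n as [|n IH]; intros [|k] Hk; simpl; try lia; try reflexivity.
  rewrite !IH by lia. reflexivity.
Qed.

Lemma bin_diag n : bin n n = 1%nat.
Proof. induction n as [|n IH]; simpl; [reflexivity|]. rewrite IH, bin_small; lia. Qed.

Lemma bin_sym a b : bin (a + b) a = bin (a + b) b.
Proof.
  revert b; induction a as [|a IHa]; intros b; [simpl; now rewrite bin_0, bin_diag|].
  induction b as [|b IHb]; [rewrite Nat.add_0_r, bin_0, bin_diag; reflexivity|].
  replace (S a + S b)%nat with (S (a + S b)) by lia. simpl bin.
  rewrite (IHa (S b)). replace (a + S b)%nat with (S a + b)%nat by lia. rewrite IHb. lia.
Qed.

Lemma bin_succ_absorb n k : ((k + 1) * bin (S n) (S k) = S n * bin n k)%nat.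
Proof.
  revert k; induction n as [|n IH]; intros k; [destruct k; simpl; lia|].
  change (bin (S (S n)) (S k)) with (bin (S n) k + bin (S n) (S k))%nat.
  destruct k as [|k].
  - specialize (IH 0%nat). simpl in *. rewrite !bin_0 in *. lia.
  - pose proof (IH k) as Hk. pose proof (IH (S k)) as HSk.
    change (bin (S n) (S k)) with (bin n k + bin n (S k))%nat in *.
    change (bin (S n) (S (S k))) with (bin n (S k) + bin n (S (S k)))%nat in *.
    nia.
Qed.

Lemma bin_absorb n k : ((k + 1) * bin n (S k) = (n - k) * bin n k)%nat.
Proof.
  pose proof (bin_succ_absorb n k) as H.
  change (bin (S n) (S k)) with (bin n k + bin n (S k))%nat in H.
  destruct (Nat.le_gt_cases k n); [nia|]. rewrite !bin_small by lia. lia.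
Qed.

Lemma bin_fact n k : (k <= n)%nat -> (bin n k * fact k * fact (n - k) = fact n)%nat.
Proof.
  revert n; induction k as [|k IH]; intros n Hk.
  - rewrite bin_0, Nat.sub_0_r. simpl. lia.
  - destruct n as [|n]; [lia|].
    rewrite Nat.sub_succ, (fact_simpl k), (fact_simpl n), <- (IH n) by lia.
    transitivity ((k + 1) * bin (S n) (S k) * fact k * fact (n - k))%nat; [ring|].
    rewrite bin_succ_absorb. ring.
Qed.

Lemma bin_vandermonde a b m :
  fsum (S m) (fun i => INR (bin a i) * INR (bin b (m - i))) = INR (bin (a + b) m).
Proof.
  revert m; induction a as [|a IH]; intros m.
  - rewrite fsum_Sl, fsum_eq0; [simpl; rewrite Nat.sub_0_r; ring|]. intros i _. simpl. ring.
  - destruct m as [|m]; [simpl; rewrite bin_0; simpl; ring|].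
    rewrite fsum_Sl, bin_0, Nat.sub_0_r.
    rewrite (fsum_ext _ _ (fun j => INR (bin a j) * INR (bin b (m - j))
                                 + INR (bin a (S j)) * INR (bin b (m - j)))).
    2:{ intros j _. simpl bin. rewrite plus_INR. ring. }
    rewrite fsum_add, IH.
    pose proof (IH (S m)) as HS. rewrite fsum_Sl, bin_0, Nat.sub_0_r in HS.
    replace (S a + b)%nat with (S (a + b)) by lia. simpl bin. rewrite plus_INR.
    simpl in HS |- *. lra.
Qed.

Lemma C_bin a b : (b <= a)%nat -> Binomial.C a b = INR (bin a b).
Proof.
  intros Hb. unfold Binomial.C. rewrite <- (bin_fact a b Hb), !mult_INR.
  field. split; apply INR_fact_neq_0.
Qed.

(* Zero for [k] outside [0, n], so that Pascal's rule holds for every integer [k]. *)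
Definition binZ (n : nat) (k : Z) : R :=
  if (k <? 0)%Z then 0 else INR (bin n (Z.to_nat k)).

Lemma binZ_neg n k : (k < 0)%Z -> binZ n k = 0.
Proof. intros Hk. unfold binZ. now rewrite (proj2 (Z.ltb_lt _ _) Hk). Qed.

Lemma binZ_nat n k : binZ n (Z.of_nat k) = INR (bin n k).
Proof. unfold binZ. destruct (Z.ltb_spec (Z.of_nat k) 0); [lia|]. now rewrite Nat2Z.id. Qed.

Lemma binZ_small n k : (Z.of_nat n < k)%Z -> binZ n k = 0.
Proof.
  intros Hk. replace k with (Z.of_nat (Z.to_nat k)) by lia.
  rewrite binZ_nat, bin_small; [reflexivity | lia].
Qed.

Lemma binZ_0 n : binZ n 0 = 1.
Proof. unfold binZ. simpl. now rewrite bin_0. Qed.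

Lemma binZ_diag n : binZ n (Z.of_nat n) = 1.
Proof. now rewrite binZ_nat, bin_diag. Qed.

Lemma binZ_pascal n k : binZ (S n) k = binZ n (k - 1) + binZ n k.
Proof.
  destruct (Z_lt_le_dec k 0) as [Hk|Hk]; [rewrite !binZ_neg by lia; ring|].
  destruct (Z.eq_dec k 0) as [->|Hk0]; [rewrite (binZ_neg n (0 - 1)), !binZ_0 by lia; ring|].
  replace k with (Z.of_nat (S (Z.to_nat (k - 1)))) by lia.
  replace (Z.of_nat (S (Z.to_nat (k - 1))) - 1)%Z with (Z.of_nat (Z.to_nat (k - 1))) by lia.
  rewrite !binZ_nat. simpl bin. now rewrite plus_INR.
Qed.

Lemma binZ_sym d j : (0 <= j)%Z -> binZ d (Z.of_nat d - j) = binZ d j.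
Proof.
  intros Hj. destruct (Z_lt_le_dec (Z.of_nat d) j).
  - rewrite binZ_neg, binZ_small by lia. reflexivity.
  - replace (Z.of_nat d - j)%Z with (Z.of_nat (Z.to_nat (Z.of_nat d - j))) by lia.
    replace j with (Z.of_nat (Z.to_nat j)) at 2 by lia.
    rewrite !binZ_nat.
    replace d with (Z.to_nat (Z.of_nat d - j) + Z.to_nat j)%nat at 1 3 by lia.
    now rewrite bin_sym.
Qed.

Lemma bin_reflect_term d k :
  (bin (S (S d) + k) (S k) * bin d k = bin (S d + k) k * (bin d (S k) + 2 * bin d k))%nat.
Proof.
  destruct (Nat.le_gt_cases k d) as [Hk|Hk].
  2:{ rewrite (bin_small d k), (bin_small d (S k)) by lia. lia. }
  replace (S (S d) + k)%nat with (S (S d + k)) by lia.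
  pose proof (bin_succ_absorb (S d + k) k) as HA. pose proof (bin_absorb d k) as Hc.
  apply (Nat.mul_cancel_l _ _ (k + 1)); [lia|]. nia.
Qed.

(* [count_poly d (s + d) e] is the number of [a : Z^d] with [pathlen d a s <= s + 2 e]
   (see [lattice_count_eq]). *)
Definition count_poly (d t e : nat) : R :=
  fsum (S d) (fun k => binZ (d + k) (Z.of_nat k) * binZ t (Z.of_nat d - Z.of_nat k)
                       * binZ e (Z.of_nat k)).

Lemma count_poly_wide d t e K : (S d <= K)%nat ->
  count_poly d t e = fsum K (fun k => binZ (d + k) (Z.of_nat k)
                       * binZ t (Z.of_nat d - Z.of_nat k) * binZ e (Z.of_nat k)).
Proof.
  intros HK. symmetry. apply fsum_trunc; [exact HK|]. intros k Hk.
  rewrite (binZ_neg t) by lia. ring.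
Qed.

Lemma count_poly_e0 d t : count_poly d t 0 = binZ t (Z.of_nat d).
Proof.
  unfold count_poly. rewrite fsum_Sl, fsum_eq0.
  - rewrite Nat.add_0_r, binZ_diag, binZ_0, Z.sub_0_r. ring.
  - intros k _. rewrite (binZ_small 0) by lia. ring.
Qed.

Lemma count_poly_d0 t e : count_poly 0 t e = 1.
Proof. unfold count_poly. simpl. rewrite !binZ_0. ring. Qed.

Lemma count_poly_step_e d t e : count_poly d t (S e) - count_poly d t e =
  fsum (S (S d)) (fun k => binZ (d + k) (Z.of_nat k) * binZ t (Z.of_nat d - Z.of_nat k)
                           * binZ e (Z.of_nat k - 1)).
Proof.
  rewrite !(count_poly_wide d t _ (S (S d))), <- fsum_sub by lia.
  apply fsum_ext. intros k _. rewrite (binZ_pascal e). ring.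
Qed.

Lemma count_poly_step_t d t e : count_poly (S d) (S t) e - count_poly (S d) t e =
  fsum (S (S d)) (fun k => binZ (S d + k) (Z.of_nat k) * binZ t (Z.of_nat d - Z.of_nat k)
                           * binZ e (Z.of_nat k)).
Proof.
  unfold count_poly. rewrite <- fsum_sub. apply fsum_ext. intros k _.
  rewrite (binZ_pascal t). replace (Z.of_nat (S d) - Z.of_nat k - 1)%Z with
    (Z.of_nat d - Z.of_nat k)%Z by lia. ring.
Qed.

Lemma count_poly_mixed_diff d t e :
  count_poly (S d) (S t) (S e) - count_poly (S d) t (S e)
  - (count_poly (S d) (S (S t)) e - count_poly (S d) (S t) e)
  = count_poly d t (S e) - count_poly d t e.
Proof.
  rewrite !count_poly_step_t, count_poly_step_e. apply Rminus_diag_uniq.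
  rewrite <- !fsum_sub.
  rewrite (fsum_ext _ _ (fun k =>
    binZ (d + k) (Z.of_nat k - 1) * binZ t (Z.of_nat d - Z.of_nat k) * binZ e (Z.of_nat k - 1)
    - binZ (S d + k) (Z.of_nat k) * binZ t (Z.of_nat d - Z.of_nat k - 1) * binZ e (Z.of_nat k))).
  2:{ intros k _. rewrite (binZ_pascal (d + k)), (binZ_pascal e), (binZ_pascal t).
      replace (Z.of_nat d - Z.of_nat k + 1 - 1)%Z with (Z.of_nat d - Z.of_nat k)%Z by lia.
      simpl plus. ring. }
  rewrite fsum_sub, (fsum_shift_index (S d) _ (fun k =>
    binZ (S d + k) (Z.of_nat k) * binZ t (Z.of_nat d - Z.of_nat k - 1) * binZ e (Z.of_nat k)));
    [ring | rewrite (binZ_neg e) by lia; ring | rewrite (binZ_neg t) by lia; ring |].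
  intros k _. replace (d + S k)%nat with (S d + k)%nat by lia.
  replace (Z.of_nat (S k) - 1)%Z with (Z.of_nat k) by lia.
  replace (Z.of_nat d - Z.of_nat (S k))%Z with (Z.of_nat d - Z.of_nat k - 1)%Z by lia.
  reflexivity.
Qed.

(* The formula at endpoint [s = -1] (where [s + S d = d]) and radius [-1 + 2 (e + 1)] agrees,
   by the symmetry [a -> -a], with the one at endpoint [1] and radius [1 + 2 e]. *)
Lemma count_poly_reflect d e : count_poly (S d) d (S e) = count_poly (S d) (S (S d)) e.
Proof.
  unfold count_poly. apply Rminus_diag_uniq. rewrite <- fsum_sub.
  rewrite (fsum_ext _ _ (fun k =>
    binZ (S d + k) (Z.of_nat k) * binZ d (Z.of_nat (S d) - Z.of_nat k) * binZ e (Z.of_nat k - 1)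
    - binZ (S d + k) (Z.of_nat k) * (binZ d (Z.of_nat d - Z.of_nat k - 1)
        + 2 * binZ d (Z.of_nat d - Z.of_nat k)) * binZ e (Z.of_nat k))).
  2:{ intros k _. rewrite (binZ_pascal e), (binZ_pascal (S d)), !(binZ_pascal d).
      replace (Z.of_nat (S d) - Z.of_nat k - 1)%Z with (Z.of_nat d - Z.of_nat k)%Z by lia.
      ring. }
  rewrite fsum_sub, (fsum_shift_index (S d) _ (fun k =>
    binZ (S d + k) (Z.of_nat k) * (binZ d (Z.of_nat d - Z.of_nat k - 1)
      + 2 * binZ d (Z.of_nat d - Z.of_nat k)) * binZ e (Z.of_nat k)));
    [ring | rewrite (binZ_neg e) by lia; ring | rewrite !(binZ_neg d) by lia; ring |].
  intros k _.
  replace (Z.of_nat (S k) - 1)%Z with (Z.of_nat k) by lia.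
  replace (Z.of_nat (S d) - Z.of_nat (S k))%Z with (Z.of_nat d - Z.of_nat k)%Z by lia.
  replace (Z.of_nat d - Z.of_nat k - 1)%Z with (Z.of_nat d - Z.of_nat (S k))%Z by lia.
  rewrite !binZ_sym by lia. rewrite !binZ_nat.
  replace (S d + S k)%nat with (S (S d) + k)%nat by lia.
  pose proof (bin_reflect_term d k) as H. apply (f_equal INR) in H.
  rewrite !mult_INR, plus_INR, mult_INR in H. simpl (INR 2) in H. rewrite H. ring.
Qed.

Lemma quadrant_recurrence_unique (F G : nat -> nat -> R) (g : nat -> R) (h : nat -> nat -> R) :
  (forall s, F s O = G s O) ->
  (forall e, F O (S e) = 2 * F 1%nat e - F O e + g e) ->
  (forall e, G O (S e) = 2 * G 1%nat e - G O e + g e) ->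
  (forall s e, F (S s) (S e) = F s (S e) + F (S (S s)) e - F (S s) e + h s e) ->
  (forall s e, G (S s) (S e) = G s (S e) + G (S (S s)) e - G (S s) e + h s e) ->
  forall s e, F s e = G s e.
Proof.
  intros Hrow HF0 HG0 HF HG s e. revert s.
  induction e as [|e IHe]; intros s; [apply Hrow|].
  induction s as [|s IHs].
  - rewrite HF0, HG0, !IHe. reflexivity.
  - rewrite HF, HG, IHs, !IHe. reflexivity.
Qed.

Definition ball_count (d s e : nat) : R := count_poly d (s + d) e.

(* The count in dimension [d + 1] as a sum over the last coordinate [t]: [t] runs through
   [0 .. s], then [s + 1 + j], then [-(1 + j)]. *)
Definition last_coord_sum (d s e : nat) : R :=
  fsum (S s) (fun t => ball_count d t e)
  + fsum e (fun j => ball_count d (S s + j) (e - 1 - j))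
  + fsum e (fun j => ball_count d (S j) (e - 1 - j)).

Lemma last_coord_sum_shift d s e :
  fsum (S e) (fun j => ball_count d (S s + j) (S e - 1 - j))
  = ball_count d (S s) e + fsum e (fun j => ball_count d (S (S s) + j) (e - 1 - j)).
Proof.
  rewrite fsum_Sl. f_equal; [f_equal; lia|]. apply fsum_ext. intros j _. f_equal; lia.
Qed.

Lemma hockey_stick d s :
  binZ (s + S d) (Z.of_nat (S d)) = fsum (S s) (fun t => binZ (t + d) (Z.of_nat d)).
Proof.
  induction s as [|s IH]; [simpl; rewrite !binZ_diag; ring|].
  rewrite fsum_S, <- IH. replace (S s + S d)%nat with (S (s + S d)) by lia.
  rewrite binZ_pascal. replace (Z.of_nat (S d) - 1)%Z with (Z.of_nat d) by lia.
  replace (S s + d)%nat with (s + S d)%nat by lia. ring.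
Qed.

Lemma ball_count_S d s e : ball_count (S d) s e = last_coord_sum d s e.
Proof.
  apply (quadrant_recurrence_unique (ball_count (S d)) (last_coord_sum d)
    (fun e => ball_count d 0 (S e) - ball_count d 0 e)
    (fun s e => ball_count d (S s) (S e) - ball_count d (S s) e)).
  - intros s'. unfold last_coord_sum, ball_count.
    rewrite !(fsum_eq0 O) by (intros; lia). rewrite !Rplus_0_r.
    rewrite count_poly_e0, hockey_stick. apply fsum_ext. intros t _. now rewrite count_poly_e0.
  - intros e'. unfold ball_count. simpl plus.
    rewrite <- (count_poly_mixed_diff d d e'), count_poly_reflect. ring.
  - intros e'. unfold last_coord_sum.
    change (fun j => ball_count d (S j) (S e' - 1 - j))
      with (fun j => ball_count d (S 0 + j) (S e' - 1 - j)).
    rewrite last_coord_sum_shift. simpl fsum. ring.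
  - intros s' e'. unfold ball_count.
    pose proof (count_poly_mixed_diff d (s' + S d) e') as H.
    change (S (s' + S d)) with (S s' + S d)%nat in H.
    change (S (S s' + S d)) with (S (S s') + S d)%nat in H.
    replace (S s' + d)%nat with (s' + S d)%nat by lia. lra.
  - intros s' e'. unfold last_coord_sum. rewrite !last_coord_sum_shift.
    rewrite (fsum_S (S s')), (fsum_S (S (S s'))). ring.
Qed.

Fixpoint pathlen (d : nat) (x : nat -> R) (s : R) : R :=
  match d with O => Rabs s | S d' => pathlen d' x (x d') + Rabs (s - x d') end.

Lemma pathlen_ext d x y s :
  (forall m, (m < d)%nat -> x m = y m) -> pathlen d x s = pathlen d y s.
Proof.
  revert s; induction d as [|d IH]; intros s Hxy; simpl; [reflexivity|].
  rewrite Hxy, IH; auto with arith.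
Qed.

Lemma ind_iff (P Q : Prop) : (P <-> Q) -> Defs.ind P = Defs.ind Q.
Proof.
  intros H. unfold Defs.ind.
  destruct (excluded_middle_informative P), (excluded_middle_informative Q); tauto.
Qed.

Lemma ind_le (P Q : Prop) : (P -> Q) -> Defs.ind P <= Defs.ind Q.
Proof.
  intros H. unfold Defs.ind.
  destruct (excluded_middle_informative P), (excluded_middle_informative Q); tauto || lra.
Qed.

Lemma gsum_ext d L F G : (forall a, F a = G a) -> gsum d L F = gsum d L G.
Proof.
  revert F G; induction d as [|d IH]; intros F G H; simpl; [apply H|].
  apply fsum_ext. intros. apply IH. intros. apply H.
Qed.

Lemma gsum_le d L F G : (forall a, F a <= G a) -> gsum d L F <= gsum d L G.
Proof.
  revert F G; induction d as [|d IH]; intros F G H; simpl; [apply H|].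
  apply fsum_le. intros. apply IH. intros. apply H.
Qed.

Definition lattice_count (d L : nat) (s r : Z) : R :=
  gsum d L (fun a => Defs.ind (pathlen d (fun m => IZR (a m)) (IZR s) <= IZR r)).

Lemma lattice_count_S d L s r : lattice_count (S d) L s r =
  fsum (2 * L) (fun t => lattice_count d L (Z.of_nat t - Z.of_nat L)
                                          (r - Z.abs (s - (Z.of_nat t - Z.of_nat L)))).
Proof.
  unfold lattice_count. simpl gsum. apply fsum_ext. intros t _. apply gsum_ext. intros a.
  apply ind_iff. simpl pathlen. rewrite Nat.eqb_refl.
  rewrite (pathlen_ext d _ (fun m => IZR (a m))).
  2:{ intros m Hm. destruct (Nat.eqb_spec m d); [lia|reflexivity]. }
  rewrite (minus_IZR r), abs_IZR, (minus_IZR s). lra.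
Qed.

Definition ball_count_at (d : nat) (s r : Z) : R :=
  if (Z.abs s <=? r)%Z then ball_count d (Z.to_nat (Z.abs s)) (Z.to_nat ((r - Z.abs s) / 2))
  else 0.

Lemma ball_count_at_out d s r : (r < Z.abs s)%Z -> ball_count_at d s r = 0.
Proof. intros H. unfold ball_count_at. destruct (Z.leb_spec (Z.abs s) r); lia || reflexivity. Qed.

Lemma ball_count_at_eq d s r e :
  (Z.abs s + 2 * Z.of_nat e <= r < Z.abs s + 2 * Z.of_nat e + 2)%Z ->
  ball_count_at d s r = ball_count d (Z.to_nat (Z.abs s)) e.
Proof.
  intros H. unfold ball_count_at. destruct (Z.leb_spec (Z.abs s) r); [|lia].
  f_equal. replace ((r - Z.abs s) / 2)%Z with (Z.of_nat e); [lia|].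
  apply Z.div_unique with (r - Z.abs s - 2 * Z.of_nat e)%Z; lia.
Qed.

Lemma ball_count_at_opp d s r : ball_count_at d (- s) r = ball_count_at d s r.
Proof. unfold ball_count_at. now rewrite Z.abs_opp. Qed.

Lemma fsum_reflect (g : Z -> R) (L : nat) :
  fsum (2 * L) (fun t => g (Z.of_nat t - Z.of_nat L)%Z) =
  g (- Z.of_nat L)%Z - g (Z.of_nat L) + fsum (2 * L) (fun t => g (Z.of_nat L - Z.of_nat t)%Z).
Proof.
  rewrite (fsum_rev (2 * L) (fun t => g (Z.of_nat L - Z.of_nat t)%Z)).
  pose proof (fsum_Sl (2 * L) (fun t => g (Z.of_nat t - Z.of_nat L)%Z)) as H.
  rewrite fsum_S in H.
  rewrite (fsum_ext (2 * L) (fun i => g (Z.of_nat L - Z.of_nat (2 * L - 1 - i))%Z)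
                             (fun i => g (Z.of_nat (S i) - Z.of_nat L)%Z)).
  2:{ intros i Hi. f_equal. lia. }
  replace (Z.of_nat 0 - Z.of_nat L)%Z with (- Z.of_nat L)%Z in H by lia.
  replace (Z.of_nat (2 * L) - Z.of_nat L)%Z with (Z.of_nat L) in H by lia.
  lra.
Qed.

Lemma ball_count_at_S_nonneg d (s r : Z) (L : nat) :
  (0 <= s <= r)%Z -> (s + r < Z.of_nat L)%Z ->
  fsum (2 * L) (fun t => ball_count_at d (Z.of_nat t - Z.of_nat L)
                                          (r - Z.abs (s - (Z.of_nat t - Z.of_nat L))))
  = ball_count_at (S d) s r.
Proof.
  intros Hsr HL.
  set (sn := Z.to_nat s). set (e := Z.to_nat ((r - s) / 2)).
  assert (Hs : s = Z.of_nat sn) by (unfold sn; lia).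
  assert (He : (2 * Z.of_nat e <= r - s < 2 * Z.of_nat e + 2)%Z).
  { unfold e. rewrite Z2Nat.id by (apply Z.div_pos; lia).
    pose proof (Z.mod_pos_bound (r - s) 2). pose proof (Z.div_mod (r - s) 2). lia. }
  rewrite (ball_count_at_eq (S d) s r e) by lia.
  replace (Z.to_nat (Z.abs s)) with sn by (unfold sn; lia).
  rewrite ball_count_S. unfold last_coord_sum.
  replace (2 * L)%nat with (L + L)%nat by lia. rewrite fsum_split, fsum_rev.
  rewrite (fsum_trunc L e) by (lia || (intros; apply ball_count_at_out; lia)).
  rewrite (fsum_ext e _ (fun j => ball_count d (S j) (e - 1 - j))).
  2:{ intros j Hj. rewrite (ball_count_at_eq d _ _ (e - 1 - j)) by lia. f_equal. lia. }
  rewrite (fsum_split_at (S sn) L) by lia.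
  rewrite (fsum_ext (S sn) _ (fun t => ball_count d t e)).
  2:{ intros t Ht. rewrite (ball_count_at_eq d _ _ e) by lia. f_equal. lia. }
  rewrite (fsum_trunc (L - S sn) e) by (lia || (intros; apply ball_count_at_out; lia)).
  rewrite (fsum_ext e (fun i => ball_count_at d (Z.of_nat (L + (S sn + i)) - Z.of_nat L)
                        (r - Z.abs (s - (Z.of_nat (L + (S sn + i)) - Z.of_nat L))))
                      (fun j => ball_count d (S sn + j) (e - 1 - j))).
  2:{ intros j Hj. rewrite (ball_count_at_eq d _ _ (e - 1 - j)) by lia. f_equal. lia. }
  ring.
Qed.

Lemma ball_count_at_S d (s r : Z) (L : nat) : (Z.abs s + r < Z.of_nat L)%Z ->
  fsum (2 * L) (fun t => ball_count_at d (Z.of_nat t - Z.of_nat L)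
                                          (r - Z.abs (s - (Z.of_nat t - Z.of_nat L))))
  = ball_count_at (S d) s r.
Proof.
  intros HL. destruct (Z_lt_le_dec r (Z.abs s)).
  { rewrite ball_count_at_out by lia. apply fsum_eq0. intros. apply ball_count_at_out. lia. }
  destruct (Z_le_gt_dec 0 s); [apply ball_count_at_S_nonneg; lia|].
  rewrite (fsum_reflect (fun t' => ball_count_at d t' (r - Z.abs (s - t')))).
  rewrite !ball_count_at_out by lia.
  rewrite (fsum_ext _ _ (fun t => ball_count_at d (Z.of_nat t - Z.of_nat L)
                                   (r - Z.abs (- s - (Z.of_nat t - Z.of_nat L))))).
  2:{ intros i _. rewrite <- ball_count_at_opp. f_equal; lia. }
  rewrite ball_count_at_S_nonneg by lia. rewrite <- ball_count_at_opp, Z.opp_involutive. ring.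
Qed.

Lemma lattice_count_eq d L s r :
  (Z.abs s + r < Z.of_nat L)%Z -> lattice_count d L s r = ball_count_at d s r.
Proof.
  revert s r; induction d as [|d IH]; intros s r HL.
  - unfold lattice_count, ball_count_at, ball_count. simpl. rewrite count_poly_d0, <- abs_IZR.
    unfold Defs.ind. destruct (excluded_middle_informative _) as [Hle|Hnle].
    + apply le_IZR in Hle. destruct (Z.leb_spec (Z.abs s) r); [reflexivity | lia].
    + destruct (Z.leb_spec (Z.abs s) r) as [Hsr|]; [|reflexivity].
      exfalso. now apply Hnle, IZR_le.
  - rewrite lattice_count_S, <- (ball_count_at_S d s r L) by exact HL.
    apply fsum_ext. intros t _. apply IH. lia.
Qed.

Lemma pathlen_scale d c x s :
  pathlen d (fun m => c * x m) (c * s) = Rabs c * pathlen d x s.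
Proof.
  revert s; induction d as [|d IH]; intros s; simpl; [apply Rabs_mult|].
  rewrite IH, <- Rmult_minus_distr_l, Rabs_mult. ring.
Qed.

Lemma pathlen_add d x y s t :
  pathlen d (fun m => x m + y m) (s + t) <= pathlen d x s + pathlen d y t.
Proof.
  revert s t; induction d as [|d IH]; intros s t; simpl; [apply Rabs_triang|].
  pose proof (IH (x d) (y d)).
  replace (s + t - (x d + y d)) with ((s - x d) + (t - y d)) by ring.
  pose proof (Rabs_triang (s - x d) (t - y d)). lra.
Qed.

Lemma pathlen_zero d : pathlen d (fun _ => 0) 0 = 0.
Proof.
  induction d as [|d IH]; simpl; [|rewrite IH, Rminus_0_r]; rewrite Rabs_R0; ring.
Qed.

Lemma pathlen_fsum d N (f : nat -> nat -> R) (g : nat -> R) :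
  pathlen d (fun m => fsum N (fun i => f i m)) (fsum N g)
  <= fsum N (fun i => pathlen d (f i) (g i)).
Proof.
  induction N as [|N IH]; simpl.
  - rewrite pathlen_zero. lra.
  - eapply Rle_trans; [apply (pathlen_add d (fun m => fsum N (fun i => f i m)) (f N))|]. lra.
Qed.

Lemma pathlen_ge_abs d x s : Rabs s <= pathlen d x s.
Proof.
  revert s; induction d as [|d IH]; intros s; simpl; [lra|].
  pose proof (IH (x d)). pose proof (Rabs_triang (x d) (s - x d)).
  replace (x d + (s - x d)) with s in * by ring. lra.
Qed.

Lemma pathlen_ge_coord d x s m :
  (m < d)%nat -> Rabs (x m) + Rabs (s - x m) <= pathlen d x s.
Proof.
  revert s; induction d as [|d IH]; intros s Hm; [lia|]. simpl.
  destruct (Nat.eq_dec m d) as [->|Hmd]; [pose proof (pathlen_ge_abs d x (x d)); lra|].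
  pose proof (IH (x d) ltac:(lia)). pose proof (Rabs_triang (s - x d) (x d - x m)).
  replace (s - x d + (x d - x m)) with (s - x m) in * by ring. lra.
Qed.

Lemma pathlen_le d y s : pathlen d y s <= Rabs s + 2 * fsum d (fun m => Rabs (y m)).
Proof.
  revert s; induction d as [|d IH]; intros s; simpl; [lra|].
  pose proof (IH (y d)). pose proof (Rabs_triang s (- y d)). rewrite Rabs_Ropp in *.
  unfold Rminus. lra.
Qed.

Ltac solve_Rabs :=
  repeat match goal with
  | |- context [Rabs ?t] =>
      destruct (Rcase_abs t);
      [rewrite (Rabs_left t) by assumption | rewrite (Rabs_right t) by assumption]
  end; lra.

Lemma pathlen_rootc i j d s : (i <= j)%nat -> pathlen d (rootc i j) s =
  if Nat.leb d i then Rabs s else if Nat.leb d (S j) then 1 + Rabs (s - 1) else 2 + Rabs s.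
Proof.
  intros Hij. revert s; induction d as [|d IH]; intros s; [reflexivity|].
  simpl pathlen. rewrite IH. unfold rootc.
  destruct (Nat.leb_spec (S d) i), (Nat.leb_spec d i), (Nat.leb_spec i d), (Nat.leb_spec d j),
    (Nat.leb_spec (S d) (S j)), (Nat.leb_spec d (S j)); simpl; try lia; solve_Rabs.
Qed.

Lemma pathlen_root n i j : (i <= j < n)%nat -> pathlen n (rootc i j) 0 = 2.
Proof.
  intros Hij. rewrite pathlen_rootc by lia.
  destruct (Nat.leb_spec n i); [lia|]. destruct (Nat.leb_spec n (S j)); solve_Rabs.
Qed.

(* [pathlen n x 0] is a norm, equal to 2 on every root. *)
Lemma pathlen_in_CA n x : in_CA n x -> pathlen n x 0 <= 2.
Proof.
  intros (w & v & Hwv & Hsum & Hx).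
  set (c i j k := if Nat.leb i j then (w i j - v i j) * rootc i j k else 0).
  rewrite (pathlen_ext n x (fun k => fsum n (fun i => fsum n (fun j => c i j k)))) by exact Hx.
  replace (pathlen n _ 0) with
    (pathlen n (fun k => fsum n (fun i => fsum n (fun j => c i j k)))
       (fsum n (fun i => fsum n (fun j => 0))))
    by (rewrite fsum_eq0; [reflexivity | intros; now apply fsum_eq0]).
  eapply Rle_trans; [apply pathlen_fsum|].
  eapply Rle_trans; [apply fsum_le; intros i _; apply pathlen_fsum|].
  rewrite <- (Rmult_1_r 2), <- Hsum, <- fsum_mull. apply fsum_le. intros i _.
  rewrite <- fsum_mull. apply fsum_le. intros j Hj. unfold c.
  destruct (Nat.leb_spec i j).
  - rewrite <- (Rmult_0_r (w i j - v i j)) at 1.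
    rewrite pathlen_scale, pathlen_root by lia. destruct (Hwv i j). solve_Rabs.
  - rewrite pathlen_zero. lra.
Qed.

Definition prev (y : nat -> R) (k : nat) : R := match k with O => 0 | S k' => y k' end.

Lemma pathlen_as_fsum d y s :
  pathlen d y s = fsum d (fun k => Rabs (y k - prev y k)) + Rabs (s - prev y d).
Proof.
  revert s; induction d as [|d IH]; intros s; simpl; [rewrite Rminus_0_r; ring|].
  rewrite IH. ring.
Qed.

Section ConvexDecomposition.

Variables (n : nat) (x : nat -> R).

Definition xz (k : nat) : R := if Nat.ltb k n then x k else 0.
Definition incr (k : nat) : R := xz k - prev xz k.
Definition ascent (k : nat) : R := Rmax (incr k) 0.
Definition descent (k : nat) : R := Rmax (- incr k) 0.
Definition climb : R := fsum (S n) ascent.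

Lemma fsum_incr k : fsum (S k) incr = xz k.
Proof.
  induction k as [|k IH]; [simpl; unfold incr; simpl; ring|].
  rewrite fsum_S, IH. unfold incr. simpl. ring.
Qed.

Lemma incr_split k : incr k = ascent k - descent k.
Proof. unfold ascent, descent, Rmax. destruct (Rle_dec _ 0), (Rle_dec _ 0); lra. Qed.

Lemma Rabs_incr k : Rabs (incr k) = ascent k + descent k.
Proof. unfold ascent, descent, Rmax. destruct (Rle_dec _ 0), (Rle_dec _ 0); solve_Rabs. Qed.

Lemma ascent_descent k : ascent k * descent k = 0.
Proof. unfold ascent, descent, Rmax. destruct (Rle_dec _ 0), (Rle_dec _ 0); nra. Qed.

Lemma ascent_nonneg k : 0 <= ascent k.
Proof. apply Rmax_r. Qed.

Lemma descent_nonneg k : 0 <= descent k.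
Proof. apply Rmax_r. Qed.

Lemma climb_nonneg : 0 <= climb.
Proof. apply fsum_nonneg. intros. apply ascent_nonneg. Qed.

Lemma fsum_descent : fsum (S n) descent = climb.
Proof.
  pose proof (fsum_incr n) as H. unfold xz in H at 1. rewrite Nat.ltb_irrefl in H.
  rewrite (fsum_ext _ _ (fun k => ascent k - descent k)), fsum_sub in H
    by (intros; apply incr_split).
  unfold climb. lra.
Qed.

Lemma pathlen_climb : pathlen n x 0 = 2 * climb.
Proof.
  rewrite (pathlen_ext n x xz), pathlen_as_fsum.
  2:{ intros m Hm. unfold xz. destruct (Nat.ltb_spec m n); [reflexivity | lia]. }
  replace (0 - prev xz n) with (incr n) by (unfold incr, xz; rewrite Nat.ltb_irrefl; ring).
  change (fsum n (fun k => Rabs (xz k - prev xz k)) + Rabs (incr n))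
    with (fsum (S n) (fun k => Rabs (incr k))).
  rewrite (fsum_ext _ _ (fun k => ascent k + descent k)) by (intros; apply Rabs_incr).
  rewrite fsum_add, fsum_descent. unfold climb. ring.
Qed.

(* The root [e_i + ... + e_j] is weighted by an ascent at [i] times a descent at [j + 1], its
   negative by an ascent at [j + 1] times a descent at [i]; the slack [1 - climb] is split between
   [e_0] and [-e_0].  If [climb = 0] the division yields [0], as required. *)
Definition slack (i j : nat) : R :=
  if (Nat.eqb i 0 && Nat.eqb j 0)%bool then (1 - climb) / 2 else 0.
Definition wpos (i j : nat) : R := ascent i * descent (S j) / climb + slack i j.
Definition wneg (i j : nat) : R := ascent (S j) * descent i / climb + slack i j.

Lemma weights_nonneg i j : climb <= 1 -> 0 <= wpos i j /\ 0 <= wneg i j.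
Proof.
  intros Hc. pose proof climb_nonneg.
  assert (Hinv : 0 <= / climb).
  { destruct (Req_dec climb 0) as [->|]; [rewrite Rinv_0; lra|].
    apply Rlt_le, Rinv_0_lt_compat. lra. }
  assert (0 <= slack i j) by (unfold slack; destruct (_ && _)%bool; lra).
  pose proof (ascent_nonneg i). pose proof (ascent_nonneg (S j)).
  pose proof (descent_nonneg i). pose proof (descent_nonneg (S j)).
  unfold wpos, wneg, Rdiv. split; apply Rplus_le_le_0_compat; auto; repeat apply Rmult_le_pos; auto.
Qed.

Lemma fsum_ascent_descent_pairs :
  fsum n (fun i => fsum n (fun j =>
    if Nat.leb i j then ascent i * descent (S j) + ascent (S j) * descent i else 0))
  = climb * climb.
Proof.
  rewrite (fsum_ext _ _ (fun i =>
    fsum n (fun j => if Nat.leb i j then ascent i * descent (S j) else 0)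
    + fsum n (fun j => if Nat.leb i j then ascent (S j) * descent i else 0))).
  2:{ intros i _. rewrite <- fsum_add. apply fsum_ext. intros j _. destruct (Nat.leb i j); ring. }
  rewrite fsum_add, <- (fsum_upper_triangle (fun a b => ascent a * descent b)),
    <- (fsum_upper_triangle (fun b a => ascent a * descent b)), (fsum_swap (S n) (S n)),
    <- fsum_add.
  unfold climb at 2. rewrite <- fsum_descent, <- fsum_prod.
  apply fsum_ext. intros a _. rewrite <- fsum_add. apply fsum_ext. intros b _.
  destruct (Nat.ltb_spec a b), (Nat.ltb_spec b a); try lia; try ring.
  replace b with a by lia. rewrite Rmult_comm, ascent_descent. ring.
Qed.

Lemma weights_sum : (1 <= n)%nat ->
  fsum n (fun i => fsum n (fun j => if Nat.leb i j then wpos i j + wneg i j else 0)) = 1.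
Proof.
  intros Hn.
  rewrite (fsum_ext _ _ (fun i =>
    fsum n (fun j => if Nat.leb i j
                     then ascent i * descent (S j) + ascent (S j) * descent i else 0) * / climb
    + fsum n (fun j => 2 * slack i j))).
  2:{ intros i _. rewrite <- fsum_mulr, <- fsum_add. apply fsum_ext. intros j _.
      unfold wpos, wneg, slack. destruct (Nat.leb_spec i j), (Nat.eqb_spec i 0), (Nat.eqb_spec j 0);
      simpl; try lia; unfold Rdiv; ring. }
  rewrite fsum_add, fsum_mulr, fsum_ascent_descent_pairs.
  destruct n as [|n']; [lia|]. rewrite fsum_Sl, fsum_Sl, (fsum_eq0 n'), fsum_eq0.
  - unfold slack. simpl.
    destruct (Req_dec climb 0) as [Hc|Hc]; [rewrite Hc, !Rmult_0_l; field | field; exact Hc].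
  - intros i _. apply fsum_eq0. intros j _. unfold slack. simpl. ring.
  - intros j _. unfold slack. simpl. ring.
Qed.

Lemma weights_coord k : (k < n)%nat ->
  x k = fsum n (fun i => fsum n (fun j =>
          if Nat.leb i j then (wpos i j - wneg i j) * rootc i j k else 0)).
Proof.
  intros Hk.
  set (A := fsum (S k) ascent). set (D := fsum (S k) descent).
  assert (Hx : x k = A - D).
  { unfold A, D. rewrite <- fsum_sub, (fsum_ext _ _ incr) by (intros; symmetry; apply incr_split).
    rewrite fsum_incr. unfold xz. destruct (Nat.ltb_spec k n); [reflexivity | lia]. }
  assert (HA : 0 <= A <= climb).
  { split; [apply fsum_nonneg; intros; apply ascent_nonneg|].
    apply fsum_le_len; [lia | intros; apply ascent_nonneg]. }
  assert (HD : 0 <= D <= climb).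
  { split; [apply fsum_nonneg; intros; apply descent_nonneg|].
    rewrite <- fsum_descent. apply fsum_le_len; [lia | intros; apply descent_nonneg]. }
  rewrite (fsum_ext _ _ (fun i => fsum n (fun j =>
    ((if Nat.leb i k then ascent i else 0) * (if Nat.leb k j then descent (S j) else 0)
     - (if Nat.leb k j then ascent (S j) else 0) * (if Nat.leb i k then descent i else 0))
    * / climb))).
  2:{ intros i _. apply fsum_ext. intros j _. unfold wpos, wneg, rootc, Rdiv.
      destruct (Nat.leb_spec i j), (Nat.leb_spec i k), (Nat.leb_spec k j); simpl; try lia; ring. }
  rewrite (fsum_ext _ _ (fun i =>
    (fsum n (fun j => (if Nat.leb i k then ascent i else 0)
                      * (if Nat.leb k j then descent (S j) else 0))
     - fsum n (fun j => (if Nat.leb i k then descent i else 0)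
                      * (if Nat.leb k j then ascent (S j) else 0))) * / climb)).
  2:{ intros i _. rewrite <- fsum_sub, <- fsum_mulr. apply fsum_ext. intros. ring. }
  rewrite fsum_mulr, fsum_sub, !fsum_prod, !fsum_prefix, !fsum_suffix, fsum_descent by exact Hk.
  fold A D climb. rewrite Hx.
  destruct (Req_dec climb 0) as [Hc|Hc].
  - replace A with 0 by lra. replace D with 0 by lra. ring.
  - field. exact Hc.
Qed.

Lemma in_CA_of_pathlen : (1 <= n)%nat -> pathlen n x 0 <= 2 -> in_CA n x.
Proof.
  intros Hn Hlen. rewrite pathlen_climb in Hlen.
  exists wpos, wneg. split; [|split].
  - intros i j. apply weights_nonneg. lra.
  - now apply weights_sum.
  - exact weights_coord.
Qed.

End ConvexDecomposition.

Lemma pathlen_unit_coords n y :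
  (forall m, (m < n)%nat -> Rabs (y m) <= 1) -> pathlen n y 0 <= 2 * INR n.
Proof.
  intros Hy. eapply Rle_trans; [apply pathlen_le|]. rewrite Rabs_R0.
  pose proof (fsum_le n _ _ Hy) as H. rewrite fsum_const in H. lra.
Qed.

Section GridCube.

Variables (n K : nat) (a : nat -> Z).
Hypothesis HK : (0 < K)%nat.

Let aR (m : nat) : R := IZR (a m).

Lemma INR_K_pos : 0 < INR K.
Proof. now apply lt_0_INR. Qed.

Lemma in_cube_corner : in_cube n K a (fun m => aR m / INR K).
Proof.
  intros m _. pose proof INR_K_pos. unfold aR. split; [lra|].
  apply Rmult_le_compat_r; [left; now apply Rinv_0_lt_compat | lra].
Qed.

Lemma in_cube_dist x : in_cube n K a x -> forall m, (m < n)%nat -> Rabs (INR K * x m - aR m) <= 1.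
Proof.
  intros Hx m Hm. destruct (Hx m Hm) as [Hlo Hhi]. pose proof INR_K_pos. unfold aR.
  apply Rmult_le_compat_l with (r := INR K) in Hlo, Hhi; try lra.
  replace (INR K * (IZR (a m) / INR K)) with (IZR (a m)) in Hlo by (field; lra).
  replace (INR K * ((IZR (a m) + 1) / INR K)) with (IZR (a m) + 1) in Hhi by (field; lra).
  apply Rabs_le. lra.
Qed.

Lemma pathlen_scale_K y : pathlen n (fun m => INR K * y m) 0 = INR K * pathlen n y 0.
Proof.
  pose proof INR_K_pos. pose proof (pathlen_scale n (INR K) y 0) as Hs.
  rewrite Rmult_0_r, Rabs_right in Hs by lra. exact Hs.
Qed.

Lemma in_cube_pathlen_le x : in_cube n K a x -> INR K * pathlen n x 0 <= pathlen n aR 0 + 2 * INR n.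
Proof.
  intros Hx. rewrite <- pathlen_scale_K.
  rewrite (pathlen_ext n _ (fun m => aR m + (INR K * x m - aR m))) by (intros; ring).
  rewrite <- (Rplus_0_r 0) at 1. eapply Rle_trans; [apply pathlen_add|].
  pose proof (pathlen_unit_coords n _ (in_cube_dist x Hx)). lra.
Qed.

Lemma in_cube_pathlen_ge x : in_cube n K a x -> pathlen n aR 0 <= INR K * pathlen n x 0 + 2 * INR n.
Proof.
  intros Hx. rewrite <- pathlen_scale_K.
  rewrite (pathlen_ext n aR (fun m => INR K * x m + (- (INR K * x m - aR m)))) by (intros; ring).
  rewrite <- (Rplus_0_r 0) at 1. eapply Rle_trans; [apply pathlen_add|].
  assert (Hd : forall m, (m < n)%nat -> Rabs (- (INR K * x m - aR m)) <= 1).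
  { intros. rewrite Rabs_Ropp. now apply in_cube_dist. }
  pose proof (pathlen_unit_coords n _ Hd). lra.
Qed.

Lemma pathlen_corner : INR K * pathlen n (fun m => aR m / INR K) 0 = pathlen n aR 0.
Proof.
  pose proof INR_K_pos. rewrite <- pathlen_scale_K. apply pathlen_ext. intros. field. lra.
Qed.

Lemma cube_in_CA : (1 <= n)%nat -> pathlen n aR 0 + 2 * INR n <= 2 * INR K ->
  forall x, in_cube n K a x -> in_CA n x.
Proof.
  intros Hn Ha x Hx. apply in_CA_of_pathlen; [exact Hn|].
  pose proof (in_cube_pathlen_le x Hx). pose proof INR_K_pos.
  apply (Rmult_le_reg_l (INR K)); lra.
Qed.

Lemma cube_in_CA_inv : (forall x, in_cube n K a x -> in_CA n x) -> pathlen n aR 0 <= 2 * INR K.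
Proof.
  intros Hin. pose proof (pathlen_in_CA n _ (Hin _ in_cube_corner)) as Hlen. pose proof INR_K_pos.
  rewrite <- pathlen_corner. apply Rmult_le_compat_l with (r := INR K) in Hlen; lra.
Qed.

Lemma cube_meets_CA : (1 <= n)%nat -> pathlen n aR 0 <= 2 * INR K ->
  exists x, in_cube n K a x /\ in_CA n x.
Proof.
  intros Hn Ha. exists (fun m => aR m / INR K). split; [exact in_cube_corner|].
  apply in_CA_of_pathlen; [exact Hn|]. pose proof INR_K_pos. rewrite <- pathlen_corner in Ha.
  apply (Rmult_le_reg_l (INR K)); lra.
Qed.

Lemma cube_meets_CA_inv : (exists x, in_cube n K a x /\ in_CA n x) ->
  pathlen n aR 0 <= 2 * INR K + 2 * INR n.
Proof.
  intros (x & Hx & Hin). pose proof (pathlen_in_CA n x Hin) as Hlen.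
  pose proof (in_cube_pathlen_ge x Hx). pose proof INR_K_pos.
  apply Rmult_le_compat_l with (r := INR K) in Hlen; lra.
Qed.

End GridCube.

Lemma Un_cv_eventually_eq u v l N :
  (forall k, (N <= k)%nat -> u k = v k) -> Un_cv v l -> Un_cv u l.
Proof.
  intros Huv Hv eps Heps. destruct (Hv eps Heps) as [M HM]. exists (max N M). intros k Hk.
  rewrite Huv by lia. apply HM. lia.
Qed.

Lemma Un_cv_squeeze lo u hi l N : (forall k, (N <= k)%nat -> lo k <= u k <= hi k) ->
  Un_cv lo l -> Un_cv hi l -> Un_cv u l.
Proof.
  intros H Hlo Hhi eps Heps. destruct (Hlo eps Heps) as [M1 H1], (Hhi eps Heps) as [M2 H2].
  exists (max N (max M1 M2)). intros k Hk.
  specialize (H k ltac:(lia)). specialize (H1 k ltac:(lia)). specialize (H2 k ltac:(lia)).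
  unfold R_dist in *. apply Rabs_def2 in H1, H2. apply Rabs_def1; lra.
Qed.

Lemma Un_cv_const c : Un_cv (fun _ => c) c.
Proof.
  intros eps Heps. exists O. intros. unfold R_dist. rewrite Rminus_diag, Rabs_R0. exact Heps.
Qed.

Lemma Un_cv_inv_S : Un_cv (fun k => / INR (S k)) 0.
Proof. apply (Un_cv_eventually_eq _ _ _ O (fun k _ => f_equal Rinv (S_INR k)) RinvN_cv). Qed.

Lemma Un_cv_pow u l p : Un_cv u l -> Un_cv (fun k => u k ^ p) (l ^ p).
Proof. intros H. induction p; simpl; [apply Un_cv_const | now apply CV_mult]. Qed.

Lemma Un_cv_fsum (f : nat -> nat -> R) l N :
  (forall j, (j < N)%nat -> Un_cv (fun k => f k j) (l j)) ->
  Un_cv (fun k => fsum N (f k)) (fsum N l).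
Proof.
  induction N as [|N IH]; intros H; simpl; [apply Un_cv_const|].
  apply CV_plus; [apply IH; intros; apply H; lia | apply H; lia].
Qed.

Fixpoint fprod (k : nat) (f : nat -> R) : R := match k with O => 1 | S k' => fprod k' f * f k' end.

Lemma fprod_ext k f g : (forall i, (i < k)%nat -> f i = g i) -> fprod k f = fprod k g.
Proof.
  induction k as [|k IH]; intros Hfg; simpl; [reflexivity|].
  rewrite IH, Hfg; auto with arith.
Qed.

Lemma fprod_mulr k f c : fprod k (fun i => f i * c) = fprod k f * c ^ k.
Proof. induction k; simpl; [ring | rewrite IHk; ring]. Qed.

Lemma bin_falling m j : INR (bin m j) * INR (fact j) = fprod j (fun i => INR m - INR i).
Proof.
  induction j as [|j IH]; [simpl; rewrite bin_0; simpl; ring|].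
  simpl fprod. rewrite <- IH, fact_simpl, mult_INR.
  pose proof (bin_absorb m j) as H. apply (f_equal INR) in H. rewrite !mult_INR, plus_INR in H.
  destruct (Nat.le_gt_cases j m).
  - rewrite minus_INR in H by assumption. rewrite S_INR. simpl INR in H.
    transitivity ((INR j + 1) * INR (bin m (S j)) * INR (fact j)); [ring|]. rewrite H. ring.
  - rewrite !bin_small by lia. simpl. ring.
Qed.

Lemma Un_cv_bin_scaled (m : nat -> nat) c j N :
  (forall k, (N <= k)%nat -> INR (m k) = INR (S k) + c) ->
  Un_cv (fun k => INR (bin (m k) j) * (/ INR (S k)) ^ j) (/ INR (fact j)).
Proof.
  intros Hm.
  apply (Un_cv_eventually_eq _
    (fun k => fprod j (fun i => 1 + (c - INR i) * / INR (S k)) * / INR (fact j)) _ N).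
  - intros k Hk. pose proof (INR_fact_neq_0 j). assert (INR (S k) <> 0) by (apply not_0_INR; lia).
    apply (Rmult_eq_reg_r (INR (fact j))); [|assumption].
    transitivity (INR (bin (m k) j) * INR (fact j) * (/ INR (S k)) ^ j); [ring|].
    rewrite bin_falling, <- fprod_mulr, Rmult_assoc, Rinv_l, Rmult_1_r by assumption.
    apply fprod_ext. intros i _. rewrite Hm by assumption. field. assumption.
  - assert (Hprod : Un_cv (fun k => fprod j (fun i => 1 + (c - INR i) * / INR (S k))) 1).
    { clear Hm. induction j as [|j IH]; [exact (Un_cv_const 1)|]. simpl.
      assert (Hf : Un_cv (fun k => 1 + (c - INR j) * / INR (S k)) 1).
      { pose proof (CV_plus _ _ _ _ (Un_cv_const 1)
          (CV_mult _ _ _ _ (Un_cv_const (c - INR j)) Un_cv_inv_S)) as H.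
        rewrite Rmult_0_r, Rplus_0_r in H. exact H. }
      pose proof (CV_mult _ _ _ _ IH Hf) as H. rewrite Rmult_1_r in H. exact H. }
    pose proof (CV_mult _ _ _ _ Hprod (Un_cv_const (/ INR (fact j)))) as H.
    rewrite Rmult_1_l in H. exact H.
Qed.

(* Only the top coefficient [k = n] of the count survives the scaling. *)
Lemma Un_cv_ball_count n (m : nat -> nat) c N :
  (forall k, (N <= k)%nat -> INR (m k) = INR (S k) + c) ->
  Un_cv (fun k => (/ INR (S k)) ^ n * ball_count n 0 (m k)) (INR (bin (2 * n) n) / INR (fact n)).
Proof.
  intros Hm. unfold ball_count, count_poly. rewrite Nat.add_0_l.
  set (A j := binZ (n + j) (Z.of_nat j) * binZ n (Z.of_nat n - Z.of_nat j)).
  apply (Un_cv_eventually_eq _ (fun k => fsum (S n) (fun j =>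
    A j * (INR (bin (m k) j) * (/ INR (S k)) ^ j) * (/ INR (S k)) ^ (n - j))) _ O).
  { intros k _. rewrite <- fsum_mull. apply fsum_ext. intros j Hj. unfold A. rewrite !binZ_nat.
    replace n with (j + (n - j))%nat at 1 by lia. rewrite pow_add. ring. }
  replace (INR (bin (2 * n) n) / INR (fact n))
    with (fsum (S n) (fun j => A j * / INR (fact j) * 0 ^ (n - j))).
  - apply Un_cv_fsum. intros j _. apply CV_mult; [apply CV_mult|].
    + apply Un_cv_const.
    + exact (Un_cv_bin_scaled m c j N Hm).
    + apply Un_cv_pow, Un_cv_inv_S.
  - rewrite fsum_S, fsum_eq0, Nat.sub_diag.
    + unfold A. rewrite Z.sub_diag, binZ_0, binZ_nat. replace (n + n)%nat with (2 * n)%nat by lia.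
      unfold Rdiv. ring.
    + intros j Hj. replace (n - j)%nat with (S (n - j - 1)) by lia. simpl. ring.
Qed.

Lemma lattice_count_ball n L m : (2 * Z.of_nat m < Z.of_nat L)%Z ->
  gsum n L (fun a => Defs.ind (pathlen n (fun k => IZR (a k)) 0 <= 2 * INR m)) = ball_count n 0 m.
Proof.
  intros HL. replace (ball_count n 0 m) with (ball_count_at n 0 (2 * Z.of_nat m)).
  - rewrite <- (lattice_count_eq n L 0 (2 * Z.of_nat m)) by lia.
    apply gsum_ext. intros a.
    apply ind_iff. now rewrite mult_IZR, <- INR_IZR_INZ.
  - apply (ball_count_at_eq n 0 _ m). simpl. lia.
Qed.

Lemma binomial_sum n : (1 <= n)%nat ->
  sum_f_R0 (fun i => Binomial.C (n - 1) i * Binomial.C (n + 1) (i + 1)) (n - 1)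
  = INR (bin (2 * n) n).
Proof.
  intros Hn.
  assert (Hsum : forall f N, sum_f_R0 f N = fsum (S N) f).
  { intros f N. induction N as [|N IH]; simpl; [ring | now rewrite IH]. }
  rewrite Hsum. replace (S (n - 1)) with n by lia.
  rewrite (fsum_ext _ _ (fun i => INR (bin (n - 1) i) * INR (bin (n + 1) (n - i)))).
  2:{ intros i Hi. rewrite !C_bin by lia. replace (n + 1)%nat with ((i + 1) + (n - i))%nat by lia.
      now rewrite bin_sym. }
  rewrite <- (fsum_trunc (S n) n), bin_vandermonde; [f_equal; f_equal; lia | lia|].
  intros i Hi. replace i with n by lia. rewrite bin_small by lia. simpl. ring.
Qed.

Lemma in_CA_bounded n x : in_CA n x -> forall m, (m < n)%nat -> - INR 3 <= x m <= INR 3.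
Proof.
  intros Hx m Hm. pose proof (pathlen_in_CA n x Hx).
  pose proof (pathlen_ge_coord n x 0 m Hm) as Hcoord. pose proof (Rabs_pos (0 - x m)).
  simpl INR. revert Hcoord. solve_Rabs.
Qed.

Lemma scaled_count_mono n k L (P Q : (nat -> Z) -> Prop) : (forall a, P a -> Q a) ->
  (/ INR (S k)) ^ n * gsum n L (fun a => Defs.ind (P a))
  <= (/ INR (S k)) ^ n * gsum n L (fun a => Defs.ind (Q a)).
Proof.
  intros HPQ. apply Rmult_le_compat_l.
  - apply pow_le. left. apply Rinv_0_lt_compat, lt_0_INR. lia.
  - apply gsum_le. intros a. apply ind_le, HPQ.
Qed.

Section Approximations.

Variable n : nat.
Hypothesis Hn : (1 <= n)%nat.

Let vol : R := INR (bin (2 * n) n) / INR (fact n).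
Let scaled_ball (m : nat -> nat) (k : nat) : R := (/ INR (S k)) ^ n * ball_count n 0 (m k).

Lemma inner_approx_CA : Un_cv (fun k => inner_approx n (in_CA n) 3 (S k)) vol.
Proof.
  apply (Un_cv_squeeze (scaled_ball (fun k => S k - n)%nat) _ (scaled_ball S) _ (2 * n + 1)).
  - intros k Hk. unfold inner_approx, scaled_ball.
    rewrite <- (lattice_count_ball n (3 * S k) (S k - n)),
      <- (lattice_count_ball n (3 * S k) (S k)) by lia. split; apply scaled_count_mono.
    + intros a Ha. apply (cube_in_CA n (S k) a ltac:(lia) Hn).
      rewrite minus_INR in Ha by lia. lra.
    + intros a. apply (cube_in_CA_inv n (S k) a ltac:(lia)).
  - apply (Un_cv_ball_count n _ (- INR n) n). intros k Hk. rewrite minus_INR by lia. ring.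
  - apply (Un_cv_ball_count n _ 0 O). intros. ring.
Qed.

Lemma outer_approx_CA : Un_cv (fun k => outer_approx n (in_CA n) 3 (S k)) vol.
Proof.
  apply (Un_cv_squeeze (scaled_ball S) _ (scaled_ball (fun k => S k + n)%nat) _ (2 * n)).
  - intros k Hk. unfold outer_approx, scaled_ball.
    rewrite <- (lattice_count_ball n (3 * S k) (S k)),
      <- (lattice_count_ball n (3 * S k) (S k + n)) by lia. split; apply scaled_count_mono.
    + intros a. apply (cube_meets_CA n (S k) a ltac:(lia) Hn).
    + intros a Ha. rewrite plus_INR. pose proof (cube_meets_CA_inv n (S k) a ltac:(lia) Ha). lra.
  - apply (Un_cv_ball_count n _ 0 O). intros. ring.
  - apply (Un_cv_ball_count n _ (INR n) O). intros. rewrite plus_INR. ring.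
Qed.

Lemma jordan_content_CA : jordan_content n (in_CA n) vol.
Proof.
  exists 3%nat. split; [exact (in_CA_bounded n)|].
  split; [exact inner_approx_CA | exact outer_approx_CA].
Qed.

End Approximations.

Theorem lemma4p2 (n : nat) (Hn : (1 <= n)%nat) :
  exists c : R,
    jordan_content n (in_CA n) c /\
    INR (fact n) * c
      = sum_f_R0 (fun i => Binomial.C (n - 1) i * Binomial.C (n + 1) (i + 1)) (n - 1) /\
    sum_f_R0 (fun i => Binomial.C (n - 1) i * Binomial.C (n + 1) (i + 1)) (n - 1)
      = Binomial.C (2 * n) n.
Proof.
  exists (INR (bin (2 * n) n) / INR (fact n)).
  rewrite binomial_sum by exact Hn. split; [|split].
  - exact (jordan_content_CA n Hn).
  - field. apply INR_fact_neq_0.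
  - symmetry. apply C_bin. lia.
Qed.
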